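(* Let $R$ be a regular ring with unity, let $E$ be its set of idempotents, and let $e,f\in E$. Then $\mathcal L(e)$ and $\mathcal L(f)$ are in perspective in the lattice $L(E)=E/\mathcal L$ if and only if $1\le d_l(e,f)\le 3$.
   Context: A ring is regular if for every $x$ there is $y$ with $xyx=x$. On $E$: $e\,\omega^l\,f$ iff $ef=e$; $e\,\omega^r\,f$ iff $fe=e$; $\mathcal L=\omega^l\cap(\omega^l)^{-1}$, $\mathcal R=\omega^r\cap(\omega^r)^{-1}$ (so $e\,\mathcal L\,f$ iff $Re=Rf$, $e\,\mathcal R\,f$ iff $eR=fR$), with classes $\mathcal L(e)$. $E/\mathcal L$ is ordered by $\mathcal L(e)\le\mathcal L(f)$ iff $e\,\omega^l\,f$; it is isomorphic to the lattice of principal left ideals of $R$ (a complemented modular lattice with least element $\mathcal L(0)$, greatest element $\mathcal L(1)$). Two elements of a lattice are in perspective if they have a common complement. An $E$-sequence of length $m\ge1$ from $e$ to $f$ is a sequence $e=x_0,\dots,x_m=f$ in $E$ with $x_{i-1}\,(\mathcal L\cup\mathcal R)\,x_i$ for each $i$; $d_l(e,f)$ is the least length of an $E$-sequence from $e$ to $f$ with $x_0\,\mathcal L\,x_1$, and $d_l(e,f)=0$ if none exists. *)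

From mathcomp Require Import all_boot all_algebra.
From mathcomp Require Import boolp.
Set Implicit Arguments. Unset Strict Implicit. Unset Printing Implicit Defensive.
Import GRing.Theory.
Local Open Scope ring_scope.

Section RegularRings.
Variable R : pzRingType.

Definition regular_ring : Prop := forall x : R, exists y : R, x * y * x = x.

Definition idem (e : R) : Prop := e * e = e.

Definition omega_l (e f : R) : Prop := e * f = e.
Definition omega_r (e f : R) : Prop := f * e = e.

Definition rel_L (e f : R) : Prop := omega_l e f /\ omega_l f e.
Definition rel_R (e f : R) : Prop := omega_r e f /\ omega_r f e.

(* The lattice L(E) = E/L, ordered by L(e) <= L(f) iff e omega^l f, with
   least element L(0) and greatest element L(1).  Since L(E) is a lattice,
   L(e) /\ L(g) = L(0) iff every common lower bound (in E) of e and g is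
   below 0, and L(e) \/ L(g) = L(1) iff every common upper bound is above 1. *)
Definition Lmeet_is_bot (e g : R) : Prop :=
  forall c, idem c -> omega_l c e -> omega_l c g -> omega_l c 0.
Definition Ljoin_is_top (e g : R) : Prop :=
  forall c, idem c -> omega_l e c -> omega_l g c -> omega_l 1 c.

Definition Lcomplement (e g : R) : Prop := Lmeet_is_bot e g /\ Ljoin_is_top e g.

Definition L_perspective (e f : R) : Prop :=
  exists g, idem g /\ Lcomplement e g /\ Lcomplement f g.

Definition Eseq_l (e f : R) (m : nat) : Prop :=
  (1 <= m)%N /\
  exists x : nat -> R,
    [/\ x 0%N = e, x m = f,
        (forall i, (i <= m)%N -> idem (x i)),
        (forall i, (1 <= i <= m)%N -> rel_L (x i.-1) (x i) \/ rel_R (x i.-1) (x i))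
      & rel_L (x 0%N) (x 1%N)].

Definition d_l (e f : R) : nat :=
  match pselect (exists m, Eseq_l e f m) with
  | left H =>
      @ex_minn (fun m => `[< Eseq_l e f m >])
        (let: ex_intro m Hm := H in ex_intro _ m (asboolT Hm))
  | right _ => 0%N
  end.

End RegularRings.

From mathcomp Require Import all_boot all_algebra boolp.
Set Implicit Arguments. Unset Strict Implicit. Unset Printing Implicit Defensive.
Import GRing.Theory.
Local Open Scope ring_scope.

(* L(E) is the lattice of principal left ideals, and L(g) complements L(e)
   exactly when R = Re (+) Rg.  Such a direct decomposition is cut out by an
   idempotent a with Ra = Re and R(1 - a) = Rg.  A common complement L(g) of
   L(e) and L(f) thus gives idempotents a, b with e L a, f L b and
   R(1 - a) = Rg = R(1 - b); the last equality says a R b, so e, a, b, f is an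
   E-sequence of length 3.  Conversely an E-sequence of length at most 3
   starting with an L-step can be rewritten as e L a R b L f, and then L(1 - a),
   being a complement of L(a) and of L(b), is a common complement of L(e) and
   L(f). *)

Section Idempotents.
Variable R : pzRingType.
Implicit Types a b c e f g k w x y z : R.

Lemma omega_l_trans x y z : omega_l x y -> omega_l y z -> omega_l x z.
Proof. by rewrite /omega_l => xy yz; rewrite -[in LHS]xy -mulrA yz. Qed.

Lemma omega_r_trans x y z : omega_r x y -> omega_r y z -> omega_r x z.
Proof. by rewrite /omega_r => xy yz; rewrite -[in LHS]xy mulrA yz. Qed.

Lemma rel_L_refl x : idem x -> rel_L x x. Proof. by []. Qed.

Lemma rel_R_refl x : idem x -> rel_R x x. Proof. by []. Qed.

Lemma rel_L_sym x y : rel_L x y -> rel_L y x. Proof. by case. Qed.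

Lemma rel_L_trans x y z : rel_L x y -> rel_L y z -> rel_L x z.
Proof.
move=> [xy yx] [yz zy].
by split; [apply: omega_l_trans xy yz | apply: omega_l_trans zy yx].
Qed.

Lemma rel_R_trans x y z : rel_R x y -> rel_R y z -> rel_R x z.
Proof.
move=> [xy yx] [yz zy].
by split; [apply: omega_r_trans xy yz | apply: omega_r_trans zy yx].
Qed.

Lemma idem_compl a : idem a -> idem (1 - a).
Proof. by rewrite /idem mulrBl mul1r !mulrBr mulr1 => ->; rewrite subrr subr0. Qed.

Lemma idem_join e k : idem e -> idem k -> k * e = 0 ->
  let c := e + (1 - e) * k in [/\ idem c, e * c = e & k * c = k].
Proof.
move=> ee kk ke c.
have e1e : e * (1 - e) = 0 by rewrite mulrBr mulr1 ee subrr.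
have k'e : (1 - e) * k * e = 0 by rewrite -mulrA ke mulr0.
have ek' : e * ((1 - e) * k) = 0 by rewrite mulrA e1e mul0r.
have kk' : k * ((1 - e) * k) = k by rewrite mulrA mulrBr mulr1 ke subr0 kk.
have k'k' : (1 - e) * k * ((1 - e) * k) = (1 - e) * k by rewrite -mulrA kk'.
split; rewrite /c.
- by rewrite /idem mulrDl !mulrDr ee ek' k'e k'k' addr0 add0r.
- by rewrite mulrDr ee ek' addr0.
- by rewrite mulrDr ke add0r kk'.
Qed.

Lemma omega_l_compl a b : omega_l (1 - a) (1 - b) <-> omega_r b a.
Proof.
rewrite /omega_l /omega_r mulrBr mulr1 mulrBl mul1r; split=> [H | ->].
- by apply/esym/subr0_eq/oppr_inj/(addrI (1 - a)); rewrite H oppr0 addr0.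
- by rewrite subrr subr0.
Qed.

Lemma rel_R_compl a b : rel_R a b <-> rel_L (1 - a) (1 - b).
Proof. by rewrite /rel_R /rel_L !omega_l_compl; split=> -[]. Qed.

Lemma Lcomplement_sym e g : Lcomplement e g -> Lcomplement g e.
Proof. by move=> [M J]; split=> c cc c1 c2; [apply: M | apply: J]. Qed.

Lemma Lcomplement_rel_L e e' g : rel_L e e' -> Lcomplement e g -> Lcomplement e' g.
Proof.
move=> [ee' e'e] [M J]; split=> c cc.
- by move=> ce' cg; apply: M => //; apply: omega_l_trans ce' e'e.
- by move=> e'c gc; apply: J => //; apply: omega_l_trans ee' e'c.
Qed.

Lemma Lcomplement_compl a : idem a -> Lcomplement a (1 - a).
Proof.
move=> aa; split=> c _; rewrite /omega_l.
- by move=> ca; rewrite mulr0 mulrBr mulr1 ca subrr.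
- by move=> ac; rewrite mulrBl !mul1r ac => /addIr.
Qed.

Lemma L_perspective_LRL e a b f : idem a -> idem b ->
  rel_L e a -> rel_R a b -> rel_L b f -> L_perspective e f.
Proof.
move=> aa bb ea /rel_R_compl ab bf; exists (1 - a); split; first exact: idem_compl.
split; first exact: Lcomplement_rel_L (rel_L_sym ea) (Lcomplement_compl aa).
apply: Lcomplement_rel_L bf _; apply: Lcomplement_sym.
exact: Lcomplement_rel_L (rel_L_sym ab) (Lcomplement_sym (Lcomplement_compl bb)).
Qed.

Lemma L_perspective_steps e x y f : idem x -> idem y -> idem f -> rel_L e x ->
  rel_L x y \/ rel_R x y -> rel_L y f \/ rel_R y f -> L_perspective e f.
Proof.
move=> xx yy ff ex [xy | xy] [yf | yf].
- have ef := rel_L_trans (rel_L_trans ex xy) yf.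
  exact: (L_perspective_LRL ff ff ef (rel_R_refl ff) (rel_L_refl ff)).
- exact: L_perspective_LRL yy ff (rel_L_trans ex xy) yf (rel_L_refl ff).
- exact: L_perspective_LRL xx yy ex xy yf.
- exact: L_perspective_LRL xx ff ex (rel_R_trans xy yf) (rel_L_refl ff).
Qed.

Lemma L_perspective_Eseq_l e f m : (m <= 3)%N -> Eseq_l e f m -> L_perspective e f.
Proof.
move=> m3 [m1 [x [<- <- xE xst x01]]].
case: m m1 m3 xE xst => [|[|[|[|m]]]] // _ _ xE xst.
- exact: L_perspective_steps (xE 1%N isT) (xE 1%N isT) (xE 1%N isT) x01
    (or_introl (rel_L_refl (xE 1%N isT))) (or_introl (rel_L_refl (xE 1%N isT))).
- exact: L_perspective_steps (xE 1%N isT) (xE 2%N isT) (xE 2%N isT) x01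
    (xst 2%N isT) (or_introl (rel_L_refl (xE 2%N isT))).
- exact: L_perspective_steps (xE 1%N isT) (xE 2%N isT) (xE 3%N isT) x01
    (xst 2%N isT) (xst 3%N isT).
Qed.

Lemma Eseq_l_LRL e a b f : idem e -> idem a -> idem b -> idem f ->
  rel_L e a -> rel_R a b -> rel_L b f -> Eseq_l e f 3.
Proof.
move=> ee aa bb ff ea ab bf; split=> //.
exists (fun i => match i with 0 => e | 1 => a | 2 => b | _ => f end); split=> //.
- by case=> [|[|[|[|i]]]].
- by case=> [|[|[|[|i]]]] //= _; [left | right | left].
Qed.

Lemma d_lP e f n : (1 <= d_l e f <= n)%N <-> exists2 m, (m <= n)%N & Eseq_l e f m.
Proof.
rewrite /d_l; case: pselect => [ex | nex].
- case: ex_minnP => m /asboolP Em minm; split=> [/andP[_ mn] | [k kn Ek]].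
    by exists m.
  by rewrite Em.1 /=; apply: leq_trans (minm _ (asboolT Ek)) kn.
- by split=> // -[m _ Em]; case: nex; exists m.
Qed.

Section Regular.
Hypothesis R_regular : regular_ring R.

Lemma regular_idem_generator x : exists y, idem (y * x) /\ x * (y * x) = x.
Proof.
have [y xyx] := R_regular x; exists y.
by rewrite /idem -mulrA [x * (y * x)]mulrA xyx.
Qed.

Lemma Lmeet_is_bot_eq0 e g x : Lmeet_is_bot e g -> x * e = x -> x * g = x -> x = 0.
Proof.
move=> M xe xg; have [y [yxI xyx]] := regular_idem_generator x.
have : omega_l (y * x) 0 by apply: M; rewrite // /omega_l -mulrA ?xe ?xg.
by rewrite /omega_l mulr0 => yx0; rewrite -xyx -yx0 mulr0.
Qed.

(* Re + Rg is the left ideal of the idempotent e + (1 - e) k, where Rk = Rg(1 - e). *)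
Lemma Ljoin_is_top_split_one e g : idem e -> idem g -> Ljoin_is_top e g ->
  exists a, a * e = a /\ (1 - a) * g = 1 - a.
Proof.
move=> ee gg J; have [y [kk hk]] := regular_idem_generator (g * (1 - e)).
set k := y * (g * (1 - e)) in kk hk.
have ke : k * e = 0 by rewrite /k -!mulrA mulrBl mul1r ee subrr !mulr0.
have [cI ec kc] := idem_join ee kk ke.
have gE : g = g * e + g * (1 - e) by rewrite -mulrDr addrC subrK mulr1.
have gc : g * (e + (1 - e) * k) = g.
  by rewrite {1}gE mulrDl -mulrA ec -hk -mulrA kc hk -gE.
have c1 : e + (1 - e) * k = 1 by have := J _ cI ec gc; rewrite /omega_l mul1r.
pose w := (1 - e) * y * g.
have w1e : omega_r (1 - e) w.
  by rewrite /omega_r /w -!mulrA -/k; apply: (addrI e); rewrite c1 addrC subrK.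
exists (1 - w); split; first by move/omega_l_compl: w1e; rewrite subKr.
by rewrite subKr /w -mulrA gg.
Qed.

Lemma Lmeet_is_bot_proj e g a x :
  Lmeet_is_bot e g -> a * e = a -> (1 - a) * g = 1 - a ->
  (x * e = x -> x * a = x) /\ (x * g = x -> x * a = 0).
Proof.
move=> M ae ag; have ag' : a * g = g - (1 - a) by rewrite -ag mulrBl mul1r subKr.
split=> [xe | xg].
- have : x * (1 - a) = 0.
    apply: Lmeet_is_bot_eq0 M _ _; rewrite -mulrA ?ag //.
    by rewrite mulrBl mul1r ae mulrBr xe mulrBr mulr1.
  by rewrite mulrBr mulr1 => /subr0_eq.
- apply: Lmeet_is_bot_eq0 M _ _; rewrite -mulrA ?ae //.
  by rewrite ag' mulrBr xg mulrBr mulr1 subKr.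
Qed.

Lemma Lcomplement_decomposition e g : idem e -> idem g -> Lcomplement e g ->
  exists a, [/\ idem a, rel_L e a & rel_L (1 - a) g].
Proof.
move=> ee gg [M J]; have [a [ae ag]] := Ljoin_is_top_split_one ee gg J.
have a_proj x := Lmeet_is_bot_proj x M ae ag.
exists a; split; first exact: (a_proj a).1 ae.
  by split; [apply: (a_proj e).1 ee | apply: ae].
by split=> //; rewrite /omega_l mulrBr mulr1 (a_proj g).2 // subr0.
Qed.

End Regular.
End Idempotents.

Theorem proposition4p3 (R : pzRingType) (Hreg : regular_ring R) (e f : R) :
  idem e -> idem f ->
  (L_perspective e f <-> (1 <= d_l e f <= 3)%N).
Proof.
move=> ee ff; split.
- case=> g [gg [Ce Cf]].
  have [a [aa ea ag]] := Lcomplement_decomposition Hreg ee gg Ce.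
  have [b [bb fb bg]] := Lcomplement_decomposition Hreg ff gg Cf.
  have ab : rel_R a b by apply/rel_R_compl/(rel_L_trans ag)/rel_L_sym.
  by apply/d_lP; exists 3%N; last exact: Eseq_l_LRL ee aa bb ff ea ab (rel_L_sym fb).
- by case/d_lP=> m; apply: L_perspective_Eseq_l.
Qed.
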